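(* Let $G=(V,E)$ be an acyclic finite directed graph, $\Gamma\subset V$ containing all sinks and sources with $V\setminus\Gamma\ne\emptyset$, and let $z=(z_v)_{v\in\Gamma}$ with each $z_v$ a positive multiple of $I_d$. Then at any critical point $x$ of $\Phi_d$ restricted to $\mathcal P_d^V(z)$ such that every $x_v$ ($v\in V$) is a positive multiple of $I_d$, the Hessian of this restricted function (with respect to the independent real variables $x_v(i,j)$, $v\in V\setminus\Gamma$, $1\le i\le j\le d$) is positive definite.
   Context: $v\to w$ denotes an edge; sinks have no outgoing edges, sources no incoming edges. $\mathcal P_d$: $d\times d$ real symmetric positive definite matrices. $\mathcal P_d^V(z)=\{x=(x_v)_{v\in V}\in\mathcal P_d^V:x_v=z_v\ \forall v\in\Gamma\}$. $\Phi_d(x)=\sum_{v\to w}\operatorname{tr}[x_vx_w^{-1}]$ for $x\in\mathcal P_d^V$. *)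

From HB Require Import structures.
From mathcomp Require Import all_boot all_order all_algebra.
From mathcomp Require Import all_classical all_reals all_analysis.
Set Implicit Arguments. Unset Strict Implicit. Unset Printing Implicit Defensive.
Import Order.TTheory GRing.Theory Num.Theory.
Local Open Scope ring_scope.

Definition acyclic (V : finType) (e : rel V) : Prop :=
  forall v w : V, e v w -> ~~ connect e w v.

Definition is_sink (V : finType) (e : rel V) (v : V) : bool := [forall w, ~~ e v w].
Definition is_source (V : finType) (e : rel V) (v : V) : bool := [forall w, ~~ e w v].

Definition posdef (R : realType) (d : nat) (A : 'M[R]_d) : Prop :=
  A^T = A /\ forall u : 'rV[R]_d, u != 0 -> 0 < (u *m A *m u^T) 0 0.

Definition pos_scalar (R : realType) (d : nat) (A : 'M[R]_d) : Prop :=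
  exists c : R, 0 < c /\ A = c%:M.

Definition Phi (R : realType) (d : nat) (V : finType) (e : rel V)
  (x : V -> 'M[R]_d) : R :=
  \sum_(v : V) \sum_(w : V | e v w) \tr (x v *m invmx (x w)).

(* coordinates: a real number for each (v, i, j); only those with
   v \notin Gamma and i <= j are used (the independent variables). *)
Definition coords (R : realType) (V : finType) (d : nat) :=
  V * 'I_d * 'I_d -> R.

Definition is_var (V : finType) (d : nat) (Gamma : {set V})
  (k : V * 'I_d * 'I_d) : bool :=
  (k.1.1 \notin Gamma) && (k.1.2 <= k.2)%N.

Definition symmat (R : realType) (V : finType) (d : nat)
  (Y : coords R V d) (v : V) : 'M[R]_d :=
  \matrix_(i, j) (if (i <= j)%N then Y (v, i, j) else Y (v, j, i)).

(* Phi_d restricted to P_d^V(z), as a function of the independent variables *)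
Definition PhiRestr (R : realType) (d : nat) (V : finType) (e : rel V)
  (Gamma : {set V}) (z : V -> 'M[R]_d) (Y : coords R V d) : R :=
  Phi e (fun v => if v \in Gamma then z v else symmat Y v).

Definition shift (R : realType) (V : finType) (d : nat)
  (Y : coords R V d) (k : V * 'I_d * 'I_d) (t : R) : coords R V d :=
  fun l => Y l + (if l == k then t else 0).

Definition pderiv (R : realType) (V : finType) (d : nat)
  (k : V * 'I_d * 'I_d) (f : coords R V d -> R) : coords R V d -> R :=
  fun Y => derive1 (fun t : R => f (shift Y k t)) 0.

Definition hessian (R : realType) (V : finType) (d : nat)
  (f : coords R V d -> R) (Y : coords R V d) (k l : V * 'I_d * 'I_d) : R :=
  pderiv k (pderiv l f) Y.

Definition hessian_posdef (R : realType) (V : finType) (d : nat)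
  (Gamma : {set V}) (f : coords R V d -> R) (Y : coords R V d) : Prop :=
  forall c : V * 'I_d * 'I_d -> R,
    (exists k, is_var Gamma k /\ c k != 0) ->
    0 < \sum_(k | is_var Gamma k) \sum_(l | is_var Gamma l)
          c k * hessian f Y k l * c l.

(* At a point where x_v = a_v I for all v, the Hessian quadratic form in a
   direction h (symmetric, vanishing on Gamma) is
     Q(h) = sum_{v -> w} 2 a_v a_w^-3 tr(h_w^2) - 2 a_w^-2 tr(h_v h_w).
   Criticality in the diagonal coordinates of an interior vertex u says
     sum_{u -> w} a_w^-1 = a_u^-2 sum_{v -> u} a_v,
   which lets the terms tr(h_u^2) be redistributed over the edges so that
     Q(h) = sum_{v -> w} (a_v / a_w) tr((h_w / a_w - h_v / a_v)^2) >= 0.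
   If Q(h) = 0 then h_v / a_v is constant along edges; following edges from any
   vertex of an acyclic graph ends at a sink, which lies in Gamma where h = 0,
   hence h = 0. *)

From HB Require Import structures.
From mathcomp Require Import all_boot all_order all_algebra.
From mathcomp Require Import all_classical all_reals all_analysis.
From mathcomp Require Import ring.
Set Implicit Arguments. Unset Strict Implicit. Unset Printing Implicit Defensive.
Import Order.TTheory GRing.Theory Num.Theory.
Import numFieldNormedType.Exports.
Local Open Scope ring_scope.

Lemma invmx_cramer (R : comUnitRingType) n (A : 'M[R]_n) i j : A \in unitmx ->
  invmx A i j = (\det A)^-1 * \adj A i j.
Proof. by move=> Au; rewrite /invmx Au mxE. Qed.

Section MatrixCalculus.
Variable R : realType.
Implicit Types (x : R) (f g : R -> R).

Lemma is_derive_bigsum (I : Type) (r : seq I) (P : pred I) (h : I -> R -> R)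
    (dh : I -> R) x :
  (forall i, P i -> is_derive x 1 (h i) (dh i)) ->
  is_derive x 1 (fun t => \sum_(i <- r | P i) h i t) (\sum_(i <- r | P i) dh i).
Proof.
move=> hdh; elim: r => [|i r IHr].
  by rewrite big_nil; under eq_fun do rewrite big_nil; exact: is_derive_cst.
rewrite big_cons; under eq_fun do rewrite big_cons.
case: (boolP (P i)) => Pi; last exact: IHr.
by have := is_deriveD (hdh i Pi) IHr.
Qed.

Lemma derivable_bigsum (I : Type) (r : seq I) (P : pred I) (h : I -> R -> R) x :
  (forall i, P i -> derivable (h i) x 1) ->
  derivable (fun t => \sum_(i <- r | P i) h i t) x 1.
Proof.
move=> hd; have hD i : P i -> is_derive x 1 (h i) ('D_1 (h i) x).
  by move=> /hd /derivableP.
by case: (is_derive_bigsum r hD).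
Qed.

Lemma derivable_bigprod (I : Type) (r : seq I) (P : pred I) (h : I -> R -> R) x :
  (forall i, P i -> derivable (h i) x 1) ->
  derivable (fun t => \prod_(i <- r | P i) h i t) x 1.
Proof.
move=> hd; elim: r => [|i r IHr].
  by under eq_fun do rewrite big_nil; exact: derivable_cst.
under eq_fun do rewrite big_cons.
case: (boolP (P i)) => Pi; last exact: IHr.
exact: (derivableM (hd i Pi) IHr).
Qed.

Lemma derivable_neq0_near f x : derivable f x 1 -> f x != 0 ->
  \forall t \near x, f t != 0.
Proof.
by move=> /derivable1_diffP /differentiable_continuous fx fx0; exact: cvgr_neq0 fx fx0.
Qed.

Lemma derivable_det n (M : R -> 'M[R]_n) x :
  (forall i j, derivable (fun t => M t i j) x 1) -> derivable (fun t => \det (M t)) x 1.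
Proof.
move=> dM; apply: derivable_bigsum => s _.
apply: (derivableM (derivable_cst _ _ _)).
exact: derivable_bigprod.
Qed.

Variable n : nat.
Implicit Types (M N : R -> 'M[R]_n) (A D E : 'M[R]_n).

Definition is_mxderive x M D := forall i j, is_derive x 1 (fun t => M t i j) (D i j).

Lemma is_mxderive_cst A x : is_mxderive x (fun=> A) 0.
Proof. by move=> i j; rewrite mxE; exact: is_derive_cst. Qed.

Lemma is_mxderiveD M N D E x : is_mxderive x M D -> is_mxderive x N E ->
  is_mxderive x (fun t => M t + N t) (D + E).
Proof.
move=> dM dN i j; rewrite mxE; under eq_fun do rewrite mxE.
exact: is_deriveD (dM i j) (dN i j).
Qed.

Lemma is_mxderiveN M D x : is_mxderive x M D -> is_mxderive x (fun t => - M t) (- D).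
Proof.
move=> dM i j; rewrite mxE; under eq_fun do rewrite mxE.
exact: is_deriveN (dM i j).
Qed.

Lemma is_mxderive_line A E x : is_mxderive x (fun t => A + t *: E) E.
Proof.
move=> i j; under eq_fun do rewrite !mxE.
have dAE := is_deriveD (is_derive_cst (A i j) x 1)
  (is_deriveM (@is_derive_id _ _ x 1) (is_derive_cst (E i j) x 1)).
by apply: is_derive_eq dAE _; rewrite /GRing.scale /=; ring.
Qed.

Lemma is_mxderiveM M N D E x : is_mxderive x M D -> is_mxderive x N E ->
  is_mxderive x (fun t => M t *m N t) (D *m N x + M x *m E).
Proof.
move=> dM dN i j; rewrite !mxE; under eq_fun do rewrite mxE.
rewrite -big_split /=; apply: is_derive_bigsum => k _.
have dMN := is_deriveM (dM i k) (dN k j).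
by apply: is_derive_eq dMN _; rewrite /GRing.scale /=; ring.
Qed.

Lemma is_derive_mxtrace M D x : is_mxderive x M D ->
  is_derive x 1 (fun t => \tr (M t)) (\tr D).
Proof. by move=> dM; apply: is_derive_bigsum => i _. Qed.

Lemma is_mxderive_unique M D E x : is_mxderive x M D -> is_mxderive x M E -> D = E.
Proof.
move=> dD dE; apply/matrixP => i j.
by rewrite -(@derive_val _ _ _ _ _ _ _ (dD i j)) -(@derive_val _ _ _ _ _ _ _ (dE i j)).
Qed.

Lemma near_eq_is_mxderive M N D x : (\forall t \near x, M t = N t) ->
  is_mxderive x M D -> is_mxderive x N D.
Proof.
move=> MN dM i j; apply: near_eq_is_derive (dM i j).
by near=> t; rewrite (near MN t).
Unshelve. all: by end_near. Qed.

(* Near [x], Cramer's rule makes the entries of [invmx (M t)] rational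
   functions of those of [M t]. *)
Lemma derivable_invmx M x : M x \in unitmx ->
  (forall i j, derivable (fun t => M t i j) x 1) ->
  forall i j, derivable (fun t => invmx (M t) i j) x 1.
Proof.
move=> Mxu dM i j.
have det_neq0 : \forall t \near x, \det (M t) != 0.
  by apply: derivable_neq0_near; [exact: derivable_det | rewrite -unitfE -unitmxE].
apply: (@near_eq_derivable _ _ _ (fun t => (\det (M t))^-1 * \adj (M t) i j)).
  by near=> t; rewrite invmx_cramer // unitmxE unitfE (near det_neq0 t).
apply: (derivableM (f := fun t => (\det (M t))^-1) (g := fun t => \adj (M t) i j)).
  by apply: derivableV; [rewrite -unitfE -unitmxE | exact: derivable_det].
have -> : (fun t => \adj (M t) i j) =
    (fun t => (-1) ^+ (j + i) * \det (row' j (col' i (M t)))).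
  by apply/funext => t; rewrite !mxE.
apply: (derivableM (derivable_cst _ _ _) (g := fun t => \det (row' j (col' i (M t))))).
apply: derivable_det => a b.
have -> : (fun t => row' j (col' i (M t)) a b) = (fun t => M t (lift j a) (lift i b)).
  by apply/funext => t; rewrite !mxE.
exact: dM.
Unshelve. all: by end_near. Qed.

Lemma is_mxderiveV M D x : M x \in unitmx -> is_mxderive x M D ->
  is_mxderive x (fun t => invmx (M t)) (- (invmx (M x) *m D *m invmx (M x))).
Proof.
move=> Mxu dM.
have dMij i j : derivable (fun t => M t i j) x 1 by case: (dM i j).
pose D' := \matrix_(i, j) 'D_1 (fun t => invmx (M t) i j) x.
have dinv : is_mxderive x (fun t => invmx (M t)) D'.
  by move=> i j; rewrite mxE; apply/derivableP/derivable_invmx.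
have det_neq0 : \forall t \near x, \det (M t) != 0.
  by apply: derivable_neq0_near; [exact: derivable_det | rewrite -unitfE -unitmxE].
have dMinv : is_mxderive x (fun t => M t *m invmx (M t)) 0.
  apply: near_eq_is_mxderive (is_mxderive_cst 1%:M x); near=> t.
  by rewrite mulmxV // unitmxE unitfE (near det_neq0 t).
have := is_mxderive_unique (is_mxderiveM dM dinv) dMinv.
move=> /(congr1 (mulmx (invmx (M x)))); rewrite mulmx0 mulmxDr [X in _ + X]mulmxA mulVmx //.
rewrite mul1mx mulmxA => /eqP; rewrite addr_eq0 => /eqP ->.
by rewrite opprK.
Unshelve. all: by end_near. Qed.

End MatrixCalculus.

Section PhiDerivatives.
Variables (R : realType) (n : nat) (V : finType) (e : rel V).
Implicit Types (A E F : V -> 'M[R]_n) (a : V -> R).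

Definition dPhi A F : R := \sum_v \sum_(w | e v w)
  \tr (F v *m invmx (A w) - A v *m invmx (A w) *m F w *m invmx (A w)).

Definition d2Phi A E F : R := \sum_v \sum_(w | e v w)
  (- \tr (F v *m invmx (A w) *m E w *m invmx (A w))
   - \tr (E v *m invmx (A w) *m F w *m invmx (A w))
   + \tr (A v *m invmx (A w) *m E w *m invmx (A w) *m F w *m invmx (A w))
   + \tr (A v *m invmx (A w) *m F w *m invmx (A w) *m E w *m invmx (A w))).

Lemma is_derive_Phi A F : (forall w, A w \in unitmx) ->
  is_derive (0 : R) (1 : R) (fun t => Phi e (fun v => A v + t *: F v)) (dPhi A F).
Proof.
move=> Au; rewrite /Phi /dPhi.
apply: is_derive_bigsum => v _; apply: is_derive_bigsum => w _.
have Aw : A w + 0 *: F w \in unitmx by rewrite scale0r addr0.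
have dPhi_vw := is_derive_mxtrace (is_mxderiveM (is_mxderive_line (A v) (F v) 0)
  (is_mxderiveV Aw (is_mxderive_line (A w) (F w) 0))).
by apply: is_derive_eq dPhi_vw _; rewrite !scale0r !addr0 mulmxN !mulmxA.
Qed.

Lemma is_derive_dPhi A E F : (forall w, A w \in unitmx) ->
  is_derive (0 : R) (1 : R) (fun s => dPhi (fun v => A v + s *: E v) F) (d2Phi A E F).
Proof.
move=> Au; rewrite /dPhi /d2Phi.
apply: is_derive_bigsum => v _; apply: is_derive_bigsum => w _.
have Aw : A w + 0 *: E w \in unitmx by rewrite scale0r addr0.
have dinv := is_mxderiveV Aw (is_mxderive_line (A w) (E w) 0).
have d2Phi_vw := is_derive_mxtrace
  (is_mxderiveD (is_mxderiveM (is_mxderive_cst (F v) 0) dinv)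
  (is_mxderiveN (is_mxderiveM (is_mxderiveM (is_mxderiveM
    (is_mxderive_line (A v) (E v) 0) dinv) (is_mxderive_cst (F w) 0)) dinv))).
apply: is_derive_eq d2Phi_vw _.
rewrite !scale0r !addr0 !mul0mx !add0r !mulmx0 !addr0.
rewrite !(mulmxDl, mulmxDr, mulNmx, mulmxN, opprD, opprK, mulmxA).
rewrite !raddfD /= !raddfN /=; ring.
Qed.

Definition hess_edge a E F v w : R :=
  - (a w)^-1 ^+ 2 * (\tr (E w *m F v) + \tr (E v *m F w))
  + 2 * a v * (a w)^-1 ^+ 3 * \tr (E w *m F w).

Lemma dPhi_scalar a F : dPhi (fun v => (a v)%:M) F =
  \sum_v \sum_(w | e v w) ((a w)^-1 * \tr (F v) - a v * (a w)^-1 ^+ 2 * \tr (F w)).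
Proof.
apply: eq_bigr => v _; apply: eq_bigr => w _; rewrite !invmx_scalar.
do 3! rewrite ?mul_mx_scalar ?mul_scalar_mx -?scalemxAl.
by rewrite raddfB /= !mxtraceZ; ring.
Qed.

Lemma d2Phi_scalar a E F : d2Phi (fun v => (a v)%:M) E F =
  \sum_v \sum_(w | e v w) hess_edge a E F v w.
Proof.
apply: eq_bigr => v _; apply: eq_bigr => w _; rewrite /hess_edge !invmx_scalar.
do 6! rewrite ?mul_mx_scalar ?mul_scalar_mx -?scalemxAl.
rewrite !mxtraceZ [\tr (F v *m E w)]mxtrace_mulC [\tr (F w *m E w)]mxtrace_mulC.
ring.
Qed.

End PhiDerivatives.

Section EdgeSums.
Variables (V : finType) (e : rel V).

Lemma sum_edges_swap (R : nmodType) (F : V -> V -> R) :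
  \sum_v \sum_(w | e v w) F v w = \sum_w \sum_(v | e v w) F v w.
Proof.
under eq_bigr do rewrite big_mkcond.
by rewrite exchange_big; apply: eq_bigr => w _; rewrite [RHS]big_mkcond.
Qed.

Lemma exchange_quad_edges (R : comPzSemiRingType) (K : finType) (p : pred K)
    (c : K -> R) (T : K -> K -> V -> V -> R) :
  \sum_(k | p k) \sum_(l | p l) c k * (\sum_v \sum_(w | e v w) T k l v w) * c l =
  \sum_v \sum_(w | e v w) \sum_(k | p k) \sum_(l | p l) c k * T k l v w * c l.
Proof.
have distr k l : c k * (\sum_v \sum_(w | e v w) T k l v w) * c l =
    \sum_v \sum_(w | e v w) c k * T k l v w * c l.
  by rewrite mulr_sumr mulr_suml; apply: eq_bigr => v _; rewrite mulr_sumr mulr_suml.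
under eq_bigr do under eq_bigr do rewrite distr.
under eq_bigr do rewrite exchange_big.
rewrite exchange_big; apply: eq_bigr => v _.
by under eq_bigr do rewrite exchange_big; rewrite exchange_big.
Qed.

(* Acyclicity: the vertices reachable from a successor of [u] form a proper
   subset of those reachable from [u]. *)
Lemma connect_sink : acyclic e -> forall u, exists2 s, connect e u s & is_sink e s.
Proof.
move=> acyc u; move: {2}#|_| (leqnn #|[set w | connect e u w]|) => m.
elim: m u => [|m IHm] u reach_u.
  by move: reach_u; rewrite leqn0 => /eqP /card0_eq /(_ u); rewrite !inE connect0.
have [sink_u | ] := boolP (is_sink e u); first by exists u; rewrite ?connect0.
rewrite negb_forall => /existsP [w]; rewrite negbK => uw.
have [|s ws sink_s] := IHm w; last by exists s => //; apply: connect_trans ws; apply: connect1.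
rewrite -ltnS; apply: leq_trans reach_u; apply: proper_card; apply/properP; split.
  by apply/fintype.subsetP => y; rewrite !inE; apply: connect_trans; apply: connect1.
by exists u; rewrite inE ?connect0 //; apply: acyc.
Qed.

Lemma acyclic_edge_invariant (T : eqType) (g : V -> T) (c : T) : acyclic e ->
  (forall s, is_sink e s -> g s = c) -> (forall v w, e v w -> g w = g v) ->
  forall u, g u = c.
Proof.
move=> acyc g_sink g_edge u; have [s us sink_s] := connect_sink acyc u.
have closed_c : closed_mem e (mem [pred v | g v == c]).
  by move=> v w vw; rewrite !inE (g_edge v w vw).
by have := closed_connect closed_c us; rewrite !inE (g_sink s) // eqxx => /eqP.
Qed.

End EdgeSums.

Section TraceSquare.
Variables (R : realDomainType) (d : nat).
Implicit Type D : 'M[R]_d.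

Lemma mxtrace_sqr_sym D : D^T = D -> \tr (D *m D) = \sum_i \sum_j D i j ^+ 2.
Proof.
move=> symD; apply: eq_bigr => i _; rewrite mxE; apply: eq_bigr => j _.
by rewrite -[in D j i]symD mxE expr2.
Qed.

Lemma mxtrace_sqr_sym_ge0 D : D^T = D -> 0 <= \tr (D *m D).
Proof.
by move=> symD; rewrite mxtrace_sqr_sym //; do 2 apply: sumr_ge0 => ? _; apply: sqr_ge0.
Qed.

Lemma mxtrace_sqr_sym_eq0 D : D^T = D -> \tr (D *m D) = 0 -> D = 0.
Proof.
move=> symD; rewrite mxtrace_sqr_sym // => sum0; apply/matrixP => i j; rewrite mxE.
have row0 : \sum_j D i j ^+ 2 = 0.
  by apply: (psumr_eq0P _ sum0) => // k _; apply: sumr_ge0 => ? _; apply: sqr_ge0.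
by apply/eqP; rewrite -sqrf_eq0 (psumr_eq0P _ row0) // => ? _; apply: sqr_ge0.
Qed.

End TraceSquare.

Lemma mxtrace_bilinear (R : comPzRingType) (d : nat) (K : finType) (p : pred K)
    (c : K -> R) (P Q : K -> 'M[R]_d) :
  \sum_(k | p k) \sum_(l | p l) c k * \tr (P k *m Q l) * c l =
  \tr ((\sum_(k | p k) c k *: P k) *m (\sum_(l | p l) c l *: Q l)).
Proof.
rewrite mulmx_suml raddf_sum; apply: eq_bigr => k _.
rewrite mulmx_sumr raddf_sum; apply: eq_bigr => l _.
rewrite -scalemxAl -scalemxAr.
change (c k * \tr (P k *m Q l) * c l = \tr (c k *: (c l *: (P k *m Q l)))).
by rewrite !mxtraceZ [c l * _]mulrC mulrA.
Qed.

Section HessianForm.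
Variables (R : realType) (d : nat) (V : finType) (e : rel V) (Gamma : {set V}).
Variable a : V -> R.
Implicit Type h : V -> 'M[R]_d.

Definition balanced u :=
  \sum_(w | e u w) (a w)^-1 = \sum_(v | e v u) a v * (a u)^-1 ^+ 2.

Lemma sum_quad_hess_edge (K : finType) (p : pred K) (c : K -> R)
    (E : K -> V -> 'M[R]_d) v w :
  \sum_(k | p k) \sum_(l | p l) c k * hess_edge a (E k) (E l) v w * c l =
  hess_edge a (fun u => \sum_(k | p k) c k *: E k u)
    (fun u => \sum_(k | p k) c k *: E k u) v w.
Proof.
rewrite /hess_edge -!mxtrace_bilinear mulrDr !mulr_sumr -!big_split /=.
apply: eq_bigr => k _; rewrite !mulr_sumr -!big_split /=.
by apply: eq_bigr => l _; ring.
Qed.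

Hypothesis a_gt0 : forall v, 0 < a v.

Let a_neq0 v : a v != 0. Proof. by rewrite gt_eqF. Qed.

Definition scaled_diff h v w : 'M[R]_d := (a w)^-1 *: h w - (a v)^-1 *: h v.

Lemma hess_edge_sos h v w : hess_edge a h h v w =
  a v / a w * \tr (scaled_diff h v w *m scaled_diff h v w)
  + (a v * (a w)^-1 ^+ 3 * \tr (h w *m h w) - (a v)^-1 * (a w)^-1 * \tr (h v *m h v)).
Proof.
rewrite /hess_edge /scaled_diff !(mulmxBl, mulmxBr) -!scalemxAl -!scalemxAr !scalerA.
rewrite !raddfB /= !mxtraceZ.
by field; rewrite !a_neq0.
Qed.

(* Grouped by vertices, the terms at [u] are [(a u)^-1 * f u] times the defect
   of [balanced u]. *)
Lemma sum_edges_balanced (f : V -> R) :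
  (forall u, u \in Gamma -> f u = 0) -> (forall u, u \notin Gamma -> balanced u) ->
  \sum_v \sum_(w | e v w) (a v * (a w)^-1 ^+ 3 * f w - (a v)^-1 * (a w)^-1 * f v) = 0.
Proof.
move=> f_Gamma bal; under eq_bigr do rewrite sumrB.
rewrite sumrB sum_edges_swap -sumrB big1 // => u _.
have -> : \sum_(v | e v u) a v * (a u)^-1 ^+ 3 * f u =
    (a u)^-1 * f u * \sum_(v | e v u) a v * (a u)^-1 ^+ 2.
  by rewrite mulr_sumr; apply: eq_bigr => v _; ring.
have -> : \sum_(w | e u w) (a u)^-1 * (a w)^-1 * f u =
    (a u)^-1 * f u * \sum_(w | e u w) (a w)^-1.
  by rewrite mulr_sumr; apply: eq_bigr => w _; ring.
have [uG | uG] := boolP (u \in Gamma); first by rewrite f_Gamma // !(mulr0, mul0r) subrr.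
by rewrite bal // subrr.
Qed.

Lemma hess_form_gt0 h : acyclic e -> (forall v, is_sink e v -> v \in Gamma) ->
  (forall v, (h v)^T = h v) -> (forall v, v \in Gamma -> h v = 0) ->
  (forall u, u \notin Gamma -> balanced u) -> (exists u, h u != 0) ->
  0 < \sum_v \sum_(w | e v w) hess_edge a h h v w.
Proof.
move=> acyc sink_Gamma h_sym h_Gamma bal [u0 hu0].
pose S v w := a v / a w * \tr (scaled_diff h v w *m scaled_diff h v w).
have diff_sym v w : (scaled_diff h v w)^T = scaled_diff h v w.
  by rewrite /scaled_diff linearB /= !linearZ /= !h_sym.
have S_ge0 v w : 0 <= S v w.
  by rewrite mulr_ge0 ?mxtrace_sqr_sym_ge0 // divr_ge0 // ltW.
have -> : \sum_v \sum_(w | e v w) hess_edge a h h v w = \sum_v \sum_(w | e v w) S v w.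
  under eq_bigr do under eq_bigr do rewrite hess_edge_sos.
  under eq_bigr do rewrite big_split /=.
  rewrite big_split /= sum_edges_balanced ?addr0 // => u uG.
  by rewrite h_Gamma // mul0mx mxtrace0.
rewrite lt_neqAle sumr_ge0 ?andbT => [|v _]; last exact: sumr_ge0.
apply: contra hu0 => /eqP /esym sum0.
have edge_const v w : e v w -> (a w)^-1 *: h w = (a v)^-1 *: h v.
  move=> vw; apply/eqP; rewrite -subr_eq0; apply/eqP/(mxtrace_sqr_sym_eq0 (diff_sym v w)).
  have /(psumr_eq0P _) S0 : \sum_(w | e v w) S v w = 0.
    by apply: (psumr_eq0P _ sum0) => // ? _; exact: sumr_ge0.
  move: (S0 (fun w _ => S_ge0 v w) w vw) => /eqP.
  by rewrite /S !mulf_eq0 invr_eq0 !(negPf (a_neq0 _)) => /= /eqP.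
have scaled0 u : (a u)^-1 *: h u = 0.
  apply: (acyclic_edge_invariant acyc _ edge_const) => s /sink_Gamma sG.
  by rewrite h_Gamma // scaler0.
by move: (scaled0 u0) => /eqP; rewrite scaler_eq0 invr_eq0 (negPf (a_neq0 u0)).
Qed.

End HessianForm.

Lemma symmat_sym (R : realType) (V : finType) (d : nat) (Y : coords R V d) v :
  (symmat Y v)^T = symmat Y v.
Proof.
apply/matrixP => i j; rewrite !mxE.
by case: (ltngtP i j) => [ij|ij|/val_inj ->] //; rewrite ?(ltnW ij) leqNgt ij.
Qed.

Section Coordinates.
Variables (R : realType) (d : nat) (V : finType) (e : rel V) (Gamma : {set V}).
Variable z : V -> 'M[R]_d.
Implicit Types (k l : V * 'I_d * 'I_d) (Y : coords R V d).

Definition config Y v : 'M[R]_d := if v \in Gamma then z v else symmat Y v.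

Definition coord_dir k v : 'M[R]_d :=
  if v \in Gamma then 0 else symmat (fun l => (l == k)%:R) v.

Lemma config_shift Y k t v : config (shift Y k t) v = config Y v + t *: coord_dir k v.
Proof.
rewrite /config /coord_dir; case: (v \in Gamma); first by rewrite scaler0 addr0.
apply/matrixP => i j; rewrite !mxE /shift.
by case: (i <= j)%N; case: (_ == k); rewrite ?mulr1 ?mulr0 ?addr0.
Qed.

Lemma PhiRestr_shift Y k t :
  PhiRestr e Gamma z (shift Y k t) = Phi e (fun v => config Y v + t *: coord_dir k v).
Proof. by congr Phi; apply/funext => v; rewrite -config_shift. Qed.

Lemma pderiv_PhiRestr Y k : (forall w, config Y w \in unitmx) ->
  pderiv k (PhiRestr e Gamma z) Y = dPhi e (config Y) (coord_dir k).
Proof.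
move=> Yu; rewrite /pderiv derive1E.
under eq_fun do rewrite PhiRestr_shift.
by case: (is_derive_Phi e (coord_dir k) Yu).
Qed.

Lemma hessian_PhiRestr Y k l : (forall w, config Y w \in unitmx) ->
  hessian (PhiRestr e Gamma z) Y k l = d2Phi e (config Y) (coord_dir k) (coord_dir l).
Proof.
move=> Yu; rewrite /hessian {1}/pderiv derive1E.
pose p t := \prod_w \det (config Y w + t *: coord_dir k w).
have p_near : \forall t \near 0, p t != 0.
  apply: derivable_neq0_near.
    apply: derivable_bigprod => w _; apply: derivable_det => i j.
    by case: (is_mxderive_line (config Y w) (coord_dir k w) 0 i j).
  by apply/prodf_neq0 => w _; rewrite scale0r addr0 -unitfE -unitmxE.
case: (is_derive_dPhi e (coord_dir k) (coord_dir l) Yu) => _ <-.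
apply: near_eq_derive; near=> t.
rewrite pderiv_PhiRestr => [|w]; first by congr dPhi; apply/funext => v; rewrite config_shift.
rewrite config_shift unitmxE unitfE.
have pt : p t != 0 by exact: (near p_near t).
by move: pt; rewrite /p => /prodf_neq0; apply.
Unshelve. all: by end_near. Qed.

Lemma config_coords (x : V -> 'M[R]_d) :
  (forall v, (x v)^T = x v) -> (forall v, v \in Gamma -> x v = z v) ->
  config (fun k => x k.1.1 k.1.2 k.2) = x.
Proof.
move=> x_sym x_Gamma; apply/funext => v; rewrite /config.
case: ifPn => [/x_Gamma -> // | _]; apply/matrixP => i j; rewrite mxE /=.
by case: ifP => // _; rewrite -[in RHS]x_sym mxE.
Qed.

Lemma coord_dir_entry k v i j : v \notin Gamma ->
  coord_dir k v i j = ((if (i <= j)%N then (v, i, j) else (v, j, i)) == k)%:R.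
Proof. by move=> vG; rewrite /coord_dir (negPf vG) mxE; case: ifP. Qed.

Lemma sum_coord_dir (c : V * 'I_d * 'I_d -> R) v :
  \sum_(k | is_var Gamma k) c k *: coord_dir k v =
  if v \in Gamma then 0 else symmat c v.
Proof.
have [vG | vG] := boolP (v \in Gamma).
  by rewrite big1 // => k _; rewrite /coord_dir vG scaler0.
apply/matrixP => i j; rewrite summxE !mxE.
set k := if (i <= j)%N then (v, i, j) else (v, j, i).
have -> : (if (i <= j)%N then c (v, i, j) else c (v, j, i)) = c k by rewrite /k; case: ifP.
have k_var : is_var Gamma k by rewrite /k /is_var; case: leqP => [|/ltnW] /=; rewrite vG.
rewrite (bigD1 k) //= big1 => [|l /andP [_ lk]]; rewrite mxE coord_dir_entry // -/k.
  by rewrite eqxx mulr1 addr0.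
by rewrite eq_sym (negPf lk) mulr0.
Qed.

Lemma mxtrace_coord_dir u i v : u \notin Gamma -> \tr (coord_dir (u, i, i) v) = (v == u)%:R.
Proof.
move=> uG; have [vG | vG] := boolP (v \in Gamma).
  by rewrite /coord_dir vG mxtrace0; case: eqP vG uG => // -> ->.
rewrite /mxtrace (bigD1 i) //= big1 => [|j ji]; rewrite coord_dir_entry // leqnn.
  by rewrite !xpair_eqE eqxx !andbT addr0.
by rewrite !xpair_eqE (negPf ji) !andbF.
Qed.

Lemma critical_balance Y (a : V -> R) u i :
  (forall v, config Y v = (a v)%:M) -> (forall v, a v != 0) -> u \notin Gamma ->
  pderiv (u, i, i) (PhiRestr e Gamma z) Y = 0 -> balanced e a u.
Proof.
move=> Ya a_neq0 uG; rewrite pderiv_PhiRestr => [|w]; last first.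
  by rewrite Ya unitmxE det_scalar unitfE expf_neq0.
have -> : config Y = (fun v => (a v)%:M) by apply/funext.
have out_u : \sum_v \sum_(w | e v w) (a w)^-1 * (v == u)%:R = \sum_(w | e u w) (a w)^-1.
  rewrite (bigD1 u) //= [X in _ + X]big1 ?addr0; first by apply: eq_bigr => w _; rewrite eqxx mulr1.
  by move=> v /negPf vu; apply: big1 => w _; rewrite vu mulr0.
have in_u : \sum_v \sum_(w | e v w) a v * (a w)^-1 ^+ 2 * (w == u)%:R =
    \sum_(v | e v u) a v * (a u)^-1 ^+ 2.
  rewrite sum_edges_swap (bigD1 u) //= [X in _ + X]big1 ?addr0.
    by apply: eq_bigr => v _; rewrite eqxx mulr1.
  by move=> w /negPf wu; apply: big1 => v _; rewrite wu mulr0.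
have -> : dPhi e (fun v => (a v)%:M) (coord_dir (u, i, i)) =
    \sum_(w | e u w) (a w)^-1 - \sum_(v | e v u) a v * (a u)^-1 ^+ 2.
  rewrite dPhi_scalar -out_u -in_u -sumrB; apply: eq_bigr => v _.
  by rewrite -sumrB; apply: eq_bigr => w _; rewrite !mxtrace_coord_dir.
by move=> /eqP; rewrite subr_eq0 => /eqP.
Qed.

End Coordinates.

Unset Implicit Arguments.
Theorem mainTheorem17 (R : realType) (d : nat) (V : finType) (e : rel V)
  (Gamma : {set V}) (z : V -> 'M[R]_d) (x : V -> 'M[R]_d) :
  acyclic e ->
  (forall v, is_sink e v || is_source e v -> v \in Gamma) ->
  (exists v, v \notin Gamma) ->
  (forall v, v \in Gamma -> pos_scalar (z v)) ->
  (forall v, posdef (x v)) ->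
  (forall v, v \in Gamma -> x v = z v) ->
  (forall v, pos_scalar (x v)) ->
  (forall k, is_var Gamma k ->
     pderiv k (PhiRestr e Gamma z) (fun k' => x k'.1.1 k'.1.2 k'.2) = 0) ->
  hessian_posdef Gamma (PhiRestr e Gamma z) (fun k' => x k'.1.1 k'.1.2 k'.2).
Proof.
move=> acyc ends_Gamma _ _ x_posdef x_Gamma x_scalar crit c.
move=> [[[u0 i0] j0] [/andP [/= u0G i0j0] ck0]].
pose a v := x v i0 i0.
have xa v : x v = (a v)%:M by rewrite /a; have [? [_ ->]] := x_scalar v; rewrite mxE eqxx.
have a_gt0 v : 0 < a v by rewrite /a; have [? [? ->]] := x_scalar v; rewrite mxE eqxx.
have configY : config Gamma z (fun k => x k.1.1 k.1.2 k.2) = fun v => (a v)%:M.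
  by rewrite config_coords //; [apply/funext | move=> v; case: (x_posdef v)].
have Y_unit w : config Gamma z (fun k => x k.1.1 k.1.2 k.2) w \in unitmx.
  by rewrite configY unitmxE det_scalar unitfE; apply/expf_neq0/lt0r_neq0.
under eq_bigr do under eq_bigr do rewrite hessian_PhiRestr // configY d2Phi_scalar.
rewrite exchange_quad_edges.
under eq_bigr do under eq_bigr do rewrite sum_quad_hess_edge.
apply: (hess_form_gt0 (Gamma := Gamma)) => // [v sink_v | v | v vG | u uG |].
- by apply: ends_Gamma; rewrite sink_v.
- by rewrite sum_coord_dir; case: ifP => _; [rewrite trmx0 | exact: symmat_sym].
- by rewrite sum_coord_dir vG.
- apply: (critical_balance _ _ uG (crit (u, i0, i0) _)) => [v | v |].
  + by rewrite configY.
  + exact: lt0r_neq0.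
  + by rewrite /is_var /= uG leqnn.
- exists u0; rewrite sum_coord_dir (negPf u0G).
  by apply: contra ck0 => /eqP /matrixP /(_ i0 j0); rewrite !mxE i0j0 => ->.
Qed.
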